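(* Fix a monomial order on $S$. Let $J$ be an ideal of $S$ and $E$ a monomial ideal of $S$. Then $(J,\widehat E)$ is a G-nice pair. Moreover, if $\mathcal E^m_{J,E}\neq\emptyset$, then $\widehat E\in\mathcal E^m_{J,E}$ and $\widehat E$ is the smallest element of $\mathcal E^m_{J,E}$ with respect to inclusion.
   Context: $K$ is a field and $S=K[x_1,\ldots,x_n]$ with a fixed monomial order. For $0\neq f\in S$, $\mathrm{in}(f)$ denotes its leading monomial; for an ideal $I$, $\mathrm{in}(I)$ is the ideal generated by the leading monomials of the nonzero elements of $I$. A pair $(J,E)$ of ideals is G-nice if $\mathrm{in}(J+E)=\mathrm{in}(J)+\mathrm{in}(E)$. For an ideal $J$ and a monomial ideal $E$, $\widehat E$ (the G-nice monomial closure of $E$ with respect to $J$) is the intersection of all monomial ideals $F$ of $S$ with $E\subseteq F$ and $(J,F)$ G-nice. Also $\mathcal E^m_{J,E}$ is the set of monomial ideals $F$ of $S$ with $E\subseteq F$, $J+E=J+F$, and $(J,F)$ G-nice. *)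

From mathcomp Require Import all_boot all_algebra.
From mathcomp Require Import mpoly.
Set Implicit Arguments. Unset Strict Implicit. Unset Printing Implicit Defensive.
Import GRing.Theory.
Local Open Scope ring_scope.

Section Defs.
Variables (K : fieldType) (n : nat).
Local Notation S := {mpoly K[n]}.
Local Notation mon := 'X_{1..n}.

Definition monomial_order (le : rel mon) : Prop :=
  [/\ reflexive le, antisymmetric le, transitive le & total le] /\
  (forall m1 m2 m3 : mon, le m1 m2 -> le (m1 + m3)%MM (m2 + m3)%MM) /\
  (forall m : mon, le 0%MM m).

Definition is_lead (le : rel mon) (f : S) (m : mon) : Prop :=
  m \in msupp f /\ forall m', m' \in msupp f -> le m' m.

Definition is_ideal (I : S -> Prop) : Prop :=
  [/\ I 0, (forall a b, I a -> I b -> I (a + b)) & (forall r a, I a -> I (r * a))].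

Definition subideal (I J : S -> Prop) : Prop := forall p, I p -> J p.
Definition eq_ideal (I J : S -> Prop) : Prop := forall p, I p <-> J p.

Definition ideal_gen (G : S -> Prop) : S -> Prop :=
  fun p => forall I, is_ideal I -> subideal G I -> I p.

Definition ideal_sum (I J : S -> Prop) : S -> Prop :=
  fun p => exists a b, [/\ I a, J b & p = a + b].

Definition monomial_ideal (F : S -> Prop) : Prop :=
  exists M : mon -> Prop,
    eq_ideal F (ideal_gen (fun p => exists m, M m /\ p = 'X_[m])).

Definition init_ideal (le : rel mon) (I : S -> Prop) : S -> Prop :=
  ideal_gen (fun p => exists f m, [/\ I f, f != 0, is_lead le f m & p = 'X_[m]]).

Definition Gnice (le : rel mon) (J E : S -> Prop) : Prop :=
  eq_ideal (init_ideal le (ideal_sum J E))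
           (ideal_sum (init_ideal le J) (init_ideal le E)).

Definition Ghat (le : rel mon) (J E : S -> Prop) : S -> Prop :=
  fun p => forall F, monomial_ideal F -> subideal E F -> Gnice le J F -> F p.

Definition in_Em (le : rel mon) (J E F : S -> Prop) : Prop :=
  [/\ monomial_ideal F, subideal E F,
      eq_ideal (ideal_sum J E) (ideal_sum J F) & Gnice le J F].

End Defs.

(* The closure Ê is the intersection of the family of monomial ideals F
   containing E with (J,F) G-nice.
   The theorem follows: Ê ⊆ F for every F in E^m_{J,E}, so
   J + E ⊆ J + Ê ⊆ J + F = J + E. *)

From mathcomp Require Import all_boot all_algebra.
From mathcomp Require Import mpoly.
From Stdlib Require Import Classical.
Set Implicit Arguments. Unset Strict Implicit. Unset Printing Implicit Defensive.
Import GRing.Theory.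
Local Open Scope ring_scope.

Section Ideals.
Variables (K : fieldType) (n : nat).
Local Notation S := {mpoly K[n]}.
Local Notation mon := 'X_{1..n}.
Implicit Types (G I J F : S -> Prop) (p : S).

Lemma ideal_gen_ideal G : is_ideal (ideal_gen G).
Proof.
split.
- by move=> I [].
- by move=> a b Ga Gb I idI GI; case: (idI) => _ ID _; apply: ID; [apply: Ga | apply: Gb].
- by move=> r a Ga I idI GI; case: (idI) => _ _ IM; apply: IM; apply: Ga.
Qed.

Lemma ideal_gen_sub G : subideal G (ideal_gen G).
Proof. by move=> p Gp I _; apply. Qed.

Lemma ideal_gen_min G I : is_ideal I -> subideal G I -> subideal (ideal_gen G) I.
Proof. by move=> idI GI p; apply. Qed.

Lemma ideal_gen_mono G G' : subideal G G' -> subideal (ideal_gen G) (ideal_gen G').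
Proof.
move=> GG'; apply: ideal_gen_min; first exact: ideal_gen_ideal.
by move=> p /GG'; apply: ideal_gen_sub.
Qed.

Lemma ideal_sum_ideal I J : is_ideal I -> is_ideal J -> is_ideal (ideal_sum I J).
Proof.
move=> [I0 ID IM] [J0 JD JM]; split.
- by exists 0, 0; rewrite addr0.
- move=> _ _ [a [b [Ia Jb ->]]] [a' [b' [Ia' Jb' ->]]].
  by exists (a + a'), (b + b'); rewrite addrACA; split; [apply: ID | apply: JD |].
- move=> r _ [a [b [Ia Jb ->]]].
  by exists (r * a), (r * b); rewrite mulrDr; split; [apply: IM | apply: JM |].
Qed.

Lemma ideal_sum_subl I J : is_ideal J -> subideal I (ideal_sum I J).
Proof. by move=> [J0 _ _] p Ip; exists p, 0; rewrite addr0. Qed.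

Lemma ideal_sum_subr I J : is_ideal I -> subideal J (ideal_sum I J).
Proof. by move=> [I0 _ _] p Jp; exists 0, p; rewrite add0r. Qed.

Lemma ideal_sum_mono I J I' J' :
  subideal I I' -> subideal J J' -> subideal (ideal_sum I J) (ideal_sum I' J').
Proof. by move=> II' JJ' p [a [b [Ia Jb ->]]]; exists a, b; split; auto. Qed.

Lemma ideal_of_support I p :
  is_ideal I -> (forall m, m \in msupp p -> I 'X_[m]) -> I p.
Proof.
move=> [I0 ID IM] suppI; rewrite (mpolyE p).
elim: (msupp p) suppI => [|m s IHs] suppI; first by rewrite big_nil.
rewrite big_cons; apply: ID; last by apply: IHs => m' m's; apply: suppI; rewrite inE m's orbT.
by rewrite -mul_mpolyC; apply: IM; apply: suppI; rewrite mem_head.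
Qed.

Lemma monomial_ideal_ideal F : monomial_ideal F -> is_ideal F.
Proof.
move=> [M eqF]; have [G0 GD GM] := ideal_gen_ideal (fun p => exists m, M m /\ p = 'X_[m]).
split.
- exact/eqF.
- by move=> a b /eqF Fa /eqF Fb; apply/eqF; apply: GD.
- by move=> r a /eqF Fa; apply/eqF; apply: GM.
Qed.

(* a monomial ideal contains the monomials of the support of its elements:
   every such monomial is a multiple of a generator *)
Lemma monomial_ideal_supp F p m : monomial_ideal F -> F p -> m \in msupp p -> F 'X_[m].
Proof.
move=> [M eqF] Fp mp.
pose divisible (q : S) := forall m, m \in msupp q -> exists2 m0, M m0 & (m0 <= m)%MM.
have divisible_ideal : is_ideal divisible.
  split.
  - by move=> m'; rewrite msupp0.
  - by move=> a b Da Db m' /msuppD_le; rewrite mem_cat => /orP [/Da | /Db].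
  - move=> r a Da m' /msuppM_le /allpairsP [[m1 m2] /= [_ m2a ->]].
    have [m0 Mm0 le_m0] := Da _ m2a; exists m0 => //.
    exact: lepm_trans le_m0 (lem_addl _ _).
have [|m0 Mm0 le_m0] := ideal_gen_min divisible_ideal _ (proj1 (eqF p) Fp) m mp.
  move=> q [m0 [Mm0 ->]] m'; rewrite msuppX inE => /eqP ->.
  by exists m0 => //; apply: lepm_refl.
apply/eqF; rewrite -(submK le_m0) mpolyXD.
have [_ _ GM] := ideal_gen_ideal (fun q : S => exists m1, M m1 /\ q = 'X_[m1]).
by apply: GM; apply: ideal_gen_sub; exists m0.
Qed.

Lemma monomial_idealP F :
  is_ideal F -> (forall p m, F p -> m \in msupp p -> F 'X_[m]) -> monomial_ideal F.
Proof.
move=> idF suppF; exists (fun m => F 'X_[m]) => p; split.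
- move=> Fp; apply: ideal_of_support; first exact: ideal_gen_ideal.
  by move=> m mp; apply: ideal_gen_sub; exists m; split => //; apply: suppF Fp mp.
- by apply: ideal_gen_min => // q [m [Fm ->]].
Qed.

Lemma msuppX_self m : m \in msupp ('X_[m] : S).
Proof. by rewrite msuppX mem_head. Qed.

Lemma monomial_in_sum F F' m : monomial_ideal F -> monomial_ideal F' ->
  ideal_sum F F' 'X_[m] -> F 'X_[m] \/ F' 'X_[m].
Proof.
move=> monF monF' [a [b [Fa F'b eqX]]].
have := msuppX_self m; rewrite eqX => /msuppD_le; rewrite mem_cat -eqX => /orP [ma | mb].
  by left; apply: monomial_ideal_supp monF Fa ma.
by right; apply: monomial_ideal_supp monF' F'b mb.
Qed.

Section InitialIdeal.
Variable le : rel mon.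

Lemma init_ideal_monomial I : monomial_ideal (init_ideal le I).
Proof.
exists (fun m => exists f, [/\ I f, f != 0 & is_lead le f m]) => p; split.
- by apply: ideal_gen_mono => q [f [m [If nzf lead_m ->]]]; exists m; split => //; exists f.
- by apply: ideal_gen_mono => q [m [[f [If nzf lead_m]] ->]]; exists f, m.
Qed.

Lemma init_ideal_mono I I' : subideal I I' -> subideal (init_ideal le I) (init_ideal le I').
Proof.
by move=> II'; apply: ideal_gen_mono => q [f [m [If nzf lead_m ->]]]; exists f, m; split; auto.
Qed.

Lemma init_ideal_sub F : monomial_ideal F -> subideal (init_ideal le F) F.
Proof.
move=> monF; apply: ideal_gen_min; first exact: monomial_ideal_ideal.
by move=> q [f [m [Ff _ [mf _] ->]]]; apply: monomial_ideal_supp monF Ff mf.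
Qed.

(* a monomial is its own leading monomial: x^m ∈ I implies x^m ∈ in(I) *)
Lemma init_ideal_X I m : reflexive le -> I 'X_[m] -> init_ideal le I 'X_[m].
Proof.
move=> le_refl Im; apply: ideal_gen_sub; exists 'X_[m], m; split => //.
- by rewrite -msupp_eq0 msuppX.
- by split=> [|m']; [apply: msuppX_self | rewrite msuppX inE => /eqP ->].
Qed.

Lemma init_ideal_sum I J : is_ideal I -> is_ideal J ->
  subideal (ideal_sum (init_ideal le I) (init_ideal le J)) (init_ideal le (ideal_sum I J)).
Proof.
move=> idI idJ _ [a [b [Ia Jb ->]]].
have [_ initD _] := ideal_gen_ideal
  (fun p => exists f m, [/\ ideal_sum I J f, f != 0, is_lead le f m & p = 'X_[m]]).
apply: initD.
- exact: init_ideal_mono (ideal_sum_subl idJ) _ Ia.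
- exact: init_ideal_mono (ideal_sum_subr idI) _ Jb.
Qed.

End InitialIdeal.

Section Intersection.
Variables (Fam : (S -> Prop) -> Prop) (G : S -> Prop).
Hypothesis G_meet : forall p, G p <-> forall F, Fam F -> F p.
Hypothesis Fam_monomial : forall F, Fam F -> monomial_ideal F.

Lemma meet_sub F : Fam F -> subideal G F.
Proof. by move=> FamF p /G_meet; apply. Qed.

Lemma meet_ideal : is_ideal G.
Proof.
split.
- by apply/G_meet => F /Fam_monomial /monomial_ideal_ideal [].
- move=> a b /G_meet Ga /G_meet Gb; apply/G_meet => F FamF.
  case: (monomial_ideal_ideal (Fam_monomial FamF)) => _ FD _.
  exact: FD (Ga F FamF) (Gb F FamF).
- move=> r a /G_meet Ga; apply/G_meet => F FamF.
  case: (monomial_ideal_ideal (Fam_monomial FamF)) => _ _ FM.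
  exact: FM (Ga F FamF).
Qed.

Lemma meet_monomial : monomial_ideal G.
Proof.
apply: monomial_idealP; first exact: meet_ideal.
move=> p m /G_meet Gp mp; apply/G_meet => F FamF.
exact: monomial_ideal_supp (Fam_monomial FamF) (Gp F FamF) mp.
Qed.

Variables (le : rel mon) (J : S -> Prop).
Hypothesis le_refl : reflexive le.
Hypothesis idJ : is_ideal J.
Hypothesis Fam_Gnice : forall F, Fam F -> Gnice le J F.

Lemma meet_init_X m :
  init_ideal le (ideal_sum J G) 'X_[m] -> ~ init_ideal le J 'X_[m] -> G 'X_[m].
Proof.
move=> inJG notinJ; apply/G_meet => F FamF.
have inJF : init_ideal le (ideal_sum J F) 'X_[m].
  exact: init_ideal_mono (ideal_sum_mono (fun p Jp => Jp) (meet_sub FamF)) _ inJG.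
have [|inF] := monomial_in_sum (init_ideal_monomial _ _) (init_ideal_monomial _ _)
                 (proj1 (Fam_Gnice FamF _) inJF) => //.
exact: init_ideal_sub (Fam_monomial FamF) _ inF.
Qed.

Lemma meet_Gnice : Gnice le J G.
Proof.
move=> p; split; last exact: init_ideal_sum idJ meet_ideal p.
move=> inJGp; apply: ideal_of_support.
  by apply: ideal_sum_ideal; apply: ideal_gen_ideal.
move=> m mp; have inJG := monomial_ideal_supp (init_ideal_monomial _ _) inJGp mp.
have [inJ | notinJ] := classic (init_ideal le J 'X_[m]).
  exact: ideal_sum_subl (ideal_gen_ideal _) _ inJ.
apply: ideal_sum_subr; first exact: ideal_gen_ideal.
exact: init_ideal_X (meet_init_X inJG notinJ).
Qed.

End Intersection.
End Ideals.

Theorem mainTheorem11 (K : fieldType) (n : nat) (le : rel 'X_{1..n})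
  (J E : {mpoly K[n]} -> Prop) :
  monomial_order le -> is_ideal J -> monomial_ideal E ->
  Gnice le J (Ghat le J E) /\
  ((exists F, in_Em le J E F) ->
     in_Em le J E (Ghat le J E) /\
     (forall F, in_Em le J E F -> subideal (Ghat le J E) F)).
Proof.
move=> [[le_refl _ _ _] _] idJ _.
pose Fam F := [/\ monomial_ideal F, subideal E F & Gnice le J F].
have hat_meet p : Ghat le J E p <-> forall F, Fam F -> F p.
  by split=> [hatp F [] | hatp F *]; [apply: hatp | apply: hatp].
have Fam_monomial F : Fam F -> monomial_ideal F by case.
have Fam_Gnice F : Fam F -> Gnice le J F by case.
have E_hat : subideal E (Ghat le J E) by move=> p Ep F _ EF _; apply: EF.
have hat_min F : in_Em le J E F -> subideal (Ghat le J E) F.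
  move=> [monF EF _ niceF]; apply: (meet_sub hat_meet).
  exact: And3 monF EF niceF.
have nice_hat := meet_Gnice hat_meet Fam_monomial le_refl idJ Fam_Gnice.
split=> // [[F0 Em_F0]]; split=> //; split=> //.
- exact: meet_monomial hat_meet Fam_monomial.
- (* J + E ⊆ J + Ê ⊆ J + F0 = J + E *)
  have [_ _ eqJEF0 _] := Em_F0.
  move=> p; split; first exact: ideal_sum_mono (fun q Jq => Jq) E_hat p.
  by move=> /(ideal_sum_mono (fun q Jq => Jq) (hat_min _ Em_F0)) /eqJEF0.
Qed.
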